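(* Let $r\ge2$, $\ell\ge2$. There is a ring isomorphism $\rho:\widehat{\mathcal{T}}_{2\ell}(A_{2r+1})\to\widetilde{\mathcal{T}}_\ell(C_r)$ determined by (for $u\in\frac12\mathbb{Z}$): $S^{(a)}_m(u)\mapsto T^{(a)}_m(u)$ ($1\le a\le r-1$, $1\le m\le 2\ell-1$); $S^{(r)}_{2m}(u)\mapsto T^{(r)}_m(u-\frac12)T^{(r)}_m(u+\frac12)$ ($1\le m\le\ell-1$); $S^{(r)}_{2m+1}(u)\mapsto T^{(r)}_m(u)T^{(r)}_{m+1}(u)$ ($0\le m\le\ell-1$); $S^{(r+1)}_{2m}(u)\mapsto T^{(r)}_m(u)^2$ ($1\le m\le\ell-1$); and $\rho(S^{(a)}_m(u))=(-1)^m\rho(S^{(2r+2-a)}_m(u))$ for $r+2\le a\le 2r+1$; here $T^{(r)}_0(u)=1$.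
   Context: $\widetilde{\mathcal{T}}_\ell(C_r)$ is the commutative ring with generators $T^{(a)}_m(u)^{\pm1}$ ($1\le a\le r-1$, $1\le m\le 2\ell-1$; $a=r$, $1\le m\le\ell-1$; $u\in\frac12\mathbb{Z}$) and $T^{(r)}_\ell(u)$ ($u\in\frac12\mathbb{Z}$), with relations, for all $u$: $T^{(a)}_m(u-\frac12)T^{(a)}_m(u+\frac12)=T^{(a)}_{m-1}(u)T^{(a)}_{m+1}(u)+T^{(a-1)}_m(u)T^{(a+1)}_m(u)$ ($1\le a\le r-2$, $1\le m\le2\ell-1$); $T^{(r-1)}_{2m}(u-\frac12)T^{(r-1)}_{2m}(u+\frac12)=T^{(r-1)}_{2m-1}(u)T^{(r-1)}_{2m+1}(u)+T^{(r-2)}_{2m}(u)T^{(r)}_m(u-\frac12)T^{(r)}_m(u+\frac12)$ ($1\le m\le\ell-1$); $T^{(r-1)}_{2m+1}(u-\frac12)T^{(r-1)}_{2m+1}(u+\frac12)=T^{(r-1)}_{2m}(u)T^{(r-1)}_{2m+2}(u)+T^{(r-2)}_{2m+1}(u)T^{(r)}_m(u)T^{(r)}_{m+1}(u)$ ($0\le m\le\ell-1$); $T^{(r)}_m(u-1)T^{(r)}_m(u+1)=T^{(r)}_{m-1}(u)T^{(r)}_{m+1}(u)+T^{(r-1)}_{2m}(u)$ ($1\le m\le\ell-1$); with $T^{(0)}_m=T^{(a)}_0=1$, $T^{(a)}_{2\ell}=1$ ($a\le r-1$) on right sides, and $T^{(r)}_\ell(u)^2=1$, $T^{(r)}_\ell(u+1)=T^{(r)}_\ell(u)$.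 $\widehat{\mathcal{T}}_{2\ell}(A_{2r+1})$ is the commutative ring with generators $S^{(a)}_m(u)^{\pm1}$ ($1\le a\le2r+1$, $1\le m\le2\ell-1$, $u\in\frac12\mathbb{Z}$, excluding $a=r+1$ with $m$ odd), where one sets $S^{(r+1)}_m(u)=0$ for odd $m$, with relations: $S^{(a)}_m(u-\frac12)S^{(a)}_m(u+\frac12)=S^{(a)}_{m-1}(u)S^{(a)}_{m+1}(u)+S^{(a-1)}_m(u)S^{(a+1)}_m(u)$ for all $1\le a\le2r+1$, $1\le m\le2\ell-1$, $u\in\frac12\mathbb{Z}$; $S^{(a)}_m(u)=(-1)^mS^{(2r+2-a)}_m(u)$; and on right sides $S^{(a)}_0(u)=S^{(a)}_{2\ell}(u)=S^{(0)}_m(u)=1$, $S^{(2r+2)}_m(u)=(-1)^m$. *)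

From HB Require Import structures.
From mathcomp Require Import all_boot all_order all_algebra.
Set Implicit Arguments. Unset Strict Implicit. Unset Printing Implicit Defensive.
Import Order.TTheory GRing.Theory Num.Theory.
Local Open Scope ring_scope.

(* Spectral parameters u in (1/2)Z are encoded by k : int with u = k/2.
   So u -+ 1/2 is k -+ 1 and u -+ 1 is k -+ 2.
   Families are functions  X : nat (a) -> nat (m) -> int (k) -> R. *)

Definition Tgen (r l a m : nat) : bool :=
  ((1 <= a <= r.-1) && (1 <= m <= (2 * l).-1))%N || ((a == r) && (1 <= m <= l)%N).

Definition Tsys (r l : nat) (R : comUnitRingType) (T : nat -> nat -> int -> R) : Prop :=
  (forall m k, T 0%N m k = 1) /\
  (forall a k, (1 <= a <= r)%N -> T a 0%N k = 1) /\
  (forall a k, (1 <= a <= r.-1)%N -> T a (2 * l)%N k = 1) /\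
  (forall a m k, (1 <= a <= r.-1)%N -> (1 <= m <= (2 * l).-1)%N -> T a m k \is a GRing.unit) /\
  (forall m k, (1 <= m <= l.-1)%N -> T r m k \is a GRing.unit) /\
  (forall k, T r l k ^+ 2 = 1) /\
  (forall k, T r l (k + 2) = T r l k) /\
  (forall a m k, (1 <= a <= r - 2)%N -> (1 <= m <= (2 * l).-1)%N ->
     T a m (k - 1) * T a m (k + 1) =
     T a m.-1 k * T a m.+1 k + T a.-1 m k * T a.+1 m k) /\
  (forall m k, (1 <= m <= l.-1)%N ->
     T r.-1 (2 * m)%N (k - 1) * T r.-1 (2 * m)%N (k + 1) =
     T r.-1 (2 * m).-1 k * T r.-1 (2 * m).+1 k
     + T (r - 2)%N (2 * m)%N k * T r m (k - 1) * T r m (k + 1)) /\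
  (forall m k, (m <= l.-1)%N ->
     T r.-1 (2 * m).+1 (k - 1) * T r.-1 (2 * m).+1 (k + 1) =
     T r.-1 (2 * m)%N k * T r.-1 (2 * m).+2 k
     + T (r - 2)%N (2 * m).+1 k * T r m k * T r m.+1 k) /\
  (forall m k, (1 <= m <= l.-1)%N ->
     T r m (k - 2) * T r m (k + 2) = T r m.-1 k * T r m.+1 k + T r.-1 (2 * m)%N k).

Definition is_Tring (r l : nat) (A : comUnitRingType) (t : nat -> nat -> int -> A) : Prop :=
  Tsys r l t /\
  forall (R : comUnitRingType) (x : nat -> nat -> int -> R), Tsys r l x ->
    exists f : {rmorphism A -> R},
      (forall a m k, Tgen r l a m -> f (t a m k) = x a m k) /\
      (forall g : {rmorphism A -> R},
         (forall a m k, Tgen r l a m -> g (t a m k) = x a m k) -> g =1 f).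

Definition Sgen (r l a m : nat) : bool :=
  ((1 <= a <= (2 * r).+1) && (1 <= m <= (2 * l).-1))%N && ~~ ((a == r.+1) && odd m).

Definition Ssys (r l : nat) (R : comUnitRingType) (S : nat -> nat -> int -> R) : Prop :=
  (forall m k, S 0%N m k = 1) /\
  (forall m k, S (2 * r + 2)%N m k = (-1) ^+ m) /\
  (forall a k, (1 <= a <= (2 * r).+1)%N -> S a 0%N k = 1) /\
  (forall a k, (1 <= a <= (2 * r).+1)%N -> S a (2 * l)%N k = 1) /\
  (forall m k, (1 <= m <= (2 * l).-1)%N -> odd m -> S r.+1 m k = 0) /\
  (forall a m k, Sgen r l a m -> S a m k \is a GRing.unit) /\
  (forall a m k, (1 <= a <= (2 * r).+1)%N -> (1 <= m <= (2 * l).-1)%N ->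
     S a m (k - 1) * S a m (k + 1) =
     S a m.-1 k * S a m.+1 k + S a.-1 m k * S a.+1 m k) /\
  (forall a m k, (1 <= a <= (2 * r).+1)%N -> (1 <= m <= (2 * l).-1)%N ->
     S a m k = (-1) ^+ m * S (2 * r + 2 - a)%N m k).

Definition is_Sring (r l : nat) (A : comUnitRingType) (s : nat -> nat -> int -> A) : Prop :=
  Ssys r l s /\
  forall (R : comUnitRingType) (x : nat -> nat -> int -> R), Ssys r l x ->
    exists f : {rmorphism A -> R},
      (forall a m k, Sgen r l a m -> f (s a m k) = x a m k) /\
      (forall g : {rmorphism A -> R},
         (forall a m k, Sgen r l a m -> g (s a m k) = x a m k) -> g =1 f).

From HB Require Import structures.
From mathcomp Require Import all_boot all_order all_algebra.
From mathcomp Require Import zify ring.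
Set Implicit Arguments. Unset Strict Implicit. Unset Printing Implicit Defensive.
Import GRing.Theory.
Local Open Scope ring_scope.

(* Substituting the expressions of the statement for S (and using the symmetry
   S^(a)_m = (-1)^m S^(2r+2-a)_m for a > r + 1) turns every solution T of the C_r
   system into a solution of the A_(2r+1) system; universality gives [rho].
   Conversely, a solution S determines T^(r) recursively by
   T^(r)_(m+1) = S^(r)_(2m+1) / T^(r)_m, and the A_(2r+1) relations in rows r and
   r + 1 then force S^(r)_(2m) = T^(r)_m(u-1/2) T^(r)_m(u+1/2) and
   S^(r+1)_(2m) = (T^(r)_m)^2, so these T solve the C_r system and give a map back.
   Both composites fix the generators, hence are identities by uniqueness. *)

Lemma even_or_odd m : exists n, m = (2 * n)%N \/ m = ((2 * n).+1)%N.
Proof.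
exists m./2; rewrite mul2n; have := odd_double_half m.
by case: (odd m) => /= e; [right | left]; rewrite -[in LHS]e.
Qed.

Lemma odd_mul2n m : odd (2 * m) = false. Proof. by rewrite mul2n odd_double. Qed.
Lemma half_mul2n m : (2 * m)./2 = m. Proof. by rewrite mul2n doubleK. Qed.
Lemma half_mul2nS m : (2 * m).+1./2 = m.
Proof. by rewrite mul2n; exact: (half_bit_double m true). Qed.

Lemma sign_mul2n (R : pzRingType) m : (-1) ^+ (2 * m) = 1 :> R.
Proof. by rewrite -signr_odd odd_mul2n. Qed.

Lemma sign_mul2nS (R : pzRingType) m : (-1) ^+ (2 * m).+1 = -1 :> R.
Proof. by rewrite -signr_odd /= odd_mul2n. Qed.

Lemma signr_sq (R : pzRingType) m : (-1) ^+ m * (-1) ^+ m = 1 :> R.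
Proof. by rewrite -exprD addnn -mul2n sign_mul2n. Qed.

Lemma unitr_sign (R : unitRingType) m : (-1) ^+ m \is a @GRing.unit R.
Proof. by rewrite unitrX // unitrN1. Qed.

Lemma unitr_sq1 (R : comUnitRingType) (x : R) : x ^+ 2 = 1 -> x \is a GRing.unit.
Proof. by move=> x2; apply/unitrP; exists x; rewrite -expr2 x2. Qed.

Definition hirota {R : pzRingType} (X : nat -> nat -> int -> R) (a m : nat) (k : int) :=
  X a m (k - 1) * X a m (k + 1) = X a m.-1 k * X a m.+1 k + X a.-1 m k * X a.+1 m k.

(* Each product picks up either (-1)^m twice or (-1)^(m-1) (-1)^(m+1); both are 1. *)
Lemma hirota_mirror (R : comPzRingType) (n : nat) (X : nat -> nat -> int -> R) (a m : nat) (k : int) :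
    (forall b m k, (b <= n)%N -> X b m k = (-1) ^+ m * X (n - b)%N m k) ->
    (0 < a < n)%N -> (0 < m)%N ->
  hirota X a m k -> hirota X (n - a)%N m k.
Proof.
move=> Xsym ha hm; rewrite /hirota => h.
have [h0 h1 h2] : [/\ n - a <= n, (n - a).-1 <= n & (n - a).+1 <= n]%N by split; lia.
rewrite !(Xsym (n - a)%N) // !(Xsym (n - a).-1) // !(Xsym (n - a).+1) //.
have -> : (n - (n - a) = a)%N by lia.
have -> : (n - (n - a).-1 = a.+1)%N by lia.
have -> : (n - (n - a).+1 = a.-1)%N by lia.
have sgn_pm : (-1) ^+ m.-1 * (-1) ^+ m.+1 = 1 :> R.
  by rewrite -exprD (_ : m.-1 + m.+1 = m + m)%N ?exprD ?signr_sq //; lia.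
rewrite mulrACA signr_sq mul1r mulrACA sgn_pm mul1r mulrACA signr_sq mul1r.
by rewrite h [X a.+1 m k * _]mulrC.
Qed.

Section SfromT.
Variables (r l : nat) (R : comUnitRingType) (T : nat -> nat -> int -> R).

Definition SofT_base (a m : nat) (k : int) : R :=
  if (a < r)%N then T a m k
  else if a == r then
    if odd m then T r m./2 k * T r m./2.+1 k else T r m./2 (k - 1) * T r m./2 (k + 1)
  else if odd m then 0 else T r m./2 k ^+ 2.

Definition SofT (a m : nat) (k : int) : R :=
  if (a <= r.+1)%N then SofT_base a m k
  else if (a <= 2 * r + 2)%N then (-1) ^+ m * SofT_base (2 * r + 2 - a) m k else 1.

Lemma SofT_low a m k : (a <= r.+1)%N -> SofT a m k = SofT_base a m k.
Proof. by rewrite /SofT => ->. Qed.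

Lemma SofT_lt a m k : (a < r)%N -> SofT a m k = T a m k.
Proof. by move=> ha; rewrite SofT_low /SofT_base ?ha //; lia. Qed.

Lemma SofT_r_even m k : SofT r (2 * m) k = T r m (k - 1) * T r m (k + 1).
Proof. by rewrite SofT_low // /SofT_base ltnn eqxx odd_mul2n half_mul2n. Qed.

Lemma SofT_r_odd m k : SofT r (2 * m).+1 k = T r m k * T r m.+1 k.
Proof. by rewrite SofT_low // /SofT_base ltnn eqxx half_mul2nS /= odd_mul2n. Qed.

Lemma SofT_r1_even m k : SofT r.+1 (2 * m) k = T r m k ^+ 2.
Proof.
by rewrite SofT_low // /SofT_base ltnNge leqnSn /= gtn_eqF // odd_mul2n half_mul2n.
Qed.

Lemma SofT_r1_odd m k : SofT r.+1 (2 * m).+1 k = 0.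
Proof. by rewrite SofT_low // /SofT_base ltnNge leqnSn /= gtn_eqF // odd_mul2n. Qed.

Lemma SofT_sym b m k : (b <= 2 * r + 2)%N ->
  SofT b m k = (-1) ^+ m * SofT (2 * r + 2 - b) m k.
Proof.
move=> hb; case: (ltngtP b r.+1) => hbr.
- have b' : (2 * r + 2 - b <= r.+1 = false)%N by lia.
  have b'' : (2 * r + 2 - (2 * r + 2 - b) = b)%N by lia.
  rewrite /SofT ltnW // b' (_ : 2 * r + 2 - b <= 2 * r + 2)%N ?leq_subr // b''.
  by rewrite mulrA signr_sq mul1r.
- have b' : (2 * r + 2 - b <= r.+1)%N by lia.
  by rewrite /SofT leqNgt hbr hb b'.
rewrite hbr (_ : 2 * r + 2 - r.+1 = r.+1)%N; last lia.
have [n [->|->]] := even_or_odd m; first by rewrite sign_mul2n mul1r.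
by rewrite SofT_r1_odd mulr0.
Qed.

Hypotheses (hr : (2 <= r)%N) (hl : (2 <= l)%N) (HT : Tsys r l T).

Lemma T0m m k : T 0 m k = 1. Proof. by case: HT. Qed.
Lemma Ta0 a k : (1 <= a <= r)%N -> T a 0 k = 1.
Proof. by case: HT => _ [h _]; apply: h. Qed.
Lemma Ta2l a k : (1 <= a <= r.-1)%N -> T a (2 * l) k = 1.
Proof. by case: HT => _ [_ [h _]]; apply: h. Qed.
Lemma T_unit a m k : (1 <= a <= r.-1)%N -> (1 <= m <= (2 * l).-1)%N ->
  T a m k \is a GRing.unit.
Proof. by case: HT => _ [_ [_ [h _]]]; apply: h. Qed.
Lemma Trl_sq k : T r l k ^+ 2 = 1.
Proof. by case: HT => _ [_ [_ [_ [_ [h _]]]]]; apply: h. Qed.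
Lemma Trl_periodic k : T r l (k + 2) = T r l k.
Proof. by case: HT => _ [_ [_ [_ [_ [_ [h _]]]]]]; apply: h. Qed.
Lemma T_hirota a m k : (1 <= a <= r - 2)%N -> (1 <= m <= (2 * l).-1)%N ->
  hirota T a m k.
Proof. by case: HT => _ [_ [_ [_ [_ [_ [_ [h _]]]]]]]; apply: h. Qed.
Lemma Trm1_even m k : (1 <= m <= l.-1)%N ->
  T r.-1 (2 * m) (k - 1) * T r.-1 (2 * m) (k + 1) =
  T r.-1 (2 * m).-1 k * T r.-1 (2 * m).+1 k
  + T (r - 2) (2 * m) k * T r m (k - 1) * T r m (k + 1).
Proof. by case: HT => _ [_ [_ [_ [_ [_ [_ [_ [h _]]]]]]]]; apply: h. Qed.
Lemma Trm1_odd m k : (m <= l.-1)%N ->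
  T r.-1 (2 * m).+1 (k - 1) * T r.-1 (2 * m).+1 (k + 1) =
  T r.-1 (2 * m) k * T r.-1 (2 * m).+2 k
  + T (r - 2) (2 * m).+1 k * T r m k * T r m.+1 k.
Proof. by case: HT => _ [_ [_ [_ [_ [_ [_ [_ [_ [h _]]]]]]]]]; apply: h. Qed.
Lemma Tr_hirota m k : (1 <= m <= l.-1)%N ->
  T r m (k - 2) * T r m (k + 2) = T r m.-1 k * T r m.+1 k + T r.-1 (2 * m) k.
Proof. by case: HT => _ [_ [_ [_ [_ [_ [_ [_ [_ [_ h]]]]]]]]]; apply: h. Qed.

Lemma Tr_unit m k : (m <= l)%N -> T r m k \is a GRing.unit.
Proof.
move=> hm; case: (posnP m) => [->|m0]; first by rewrite Ta0 ?unitr1 //; lia.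
case: (ltngtP m l) => [mlt||->]; [|lia|exact: unitr_sq1 (Trl_sq k)].
by case: HT => _ [_ [_ [_ [h _]]]]; apply: h; lia.
Qed.

Lemma Trl_shift k : T r l (k - 1) * T r l (k + 1) = 1.
Proof. by rewrite (_ : k + 1 = k - 1 + 2) ?Trl_periodic -?expr2 ?Trl_sq //; lia. Qed.

Lemma SofT_hirota_lt a m k : (1 <= a <= r - 2)%N -> (1 <= m <= (2 * l).-1)%N ->
  hirota SofT a m k.
Proof.
move=> ha hm; have h1 : (a < r)%N by lia.
have h2 : (a.-1 < r)%N by lia.
have h3 : (a.+1 < r)%N by lia.
by rewrite /hirota !SofT_lt //; apply: T_hirota.
Qed.

Lemma SofT_hirota_rm1 m k : (1 <= m <= (2 * l).-1)%N -> hirota SofT r.-1 m k.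
Proof.
move=> hm; have h1 : (r.-1 < r)%N by lia.
have h2 : (r - 2 < r)%N by lia.
rewrite /hirota prednK; last lia.
rewrite (_ : r.-1.-1 = r - 2)%N; last lia.
have [n [em|em]] := even_or_odd m; subst m.
  by rewrite SofT_r_even !SofT_lt // mulrA Trm1_even //; lia.
by rewrite SofT_r_odd !SofT_lt // mulrA Trm1_odd //; lia.
Qed.

Lemma SofT_hirota_r m k : (1 <= m <= (2 * l).-1)%N -> hirota SofT r m k.
Proof.
move=> hm; have h1 : (r.-1 < r)%N by lia.
rewrite /hirota (SofT_lt _ _ h1).
have [n [em|em]] := even_or_odd m; subst m.
  have hn : (1 <= n <= l.-1)%N by lia.
  rewrite (_ : (2 * n).-1 = (2 * n.-1).+1)%N; last lia.
  rewrite !SofT_r_odd !SofT_r_even SofT_r1_even prednK; last lia.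
  have km : k - 1 - 1 = k - 2 by ring.
  have kp : k + 1 + 1 = k + 2 by ring.
  have := Tr_hirota k hn; rewrite subrK addrK km kp => h.
  by ring: h.
rewrite (_ : (2 * n).+2 = 2 * n.+1)%N; last lia.
by rewrite SofT_r1_odd !SofT_r_odd /= !SofT_r_even; ring.
Qed.

Lemma SofT_hirota_r1 m k : (1 <= m <= (2 * l).-1)%N -> hirota SofT r.+1 m k.
Proof.
move=> hm; have hr2 : SofT r.+2 =2 (fun m k => (-1) ^+ m * SofT r m k).
  move=> m' k'; rewrite SofT_sym; last lia.
  by rewrite (_ : 2 * r + 2 - r.+2 = r)%N //; lia.
rewrite /hirota /= hr2.
have [n [em|em]] := even_or_odd m; subst m.
  rewrite (_ : (2 * n).-1 = (2 * n.-1).+1)%N; last lia.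
  by rewrite !SofT_r1_odd !SofT_r1_even SofT_r_even sign_mul2n; ring.
rewrite (_ : (2 * n).+2 = 2 * n.+1)%N; last lia.
by rewrite /= !SofT_r1_odd !SofT_r1_even SofT_r_odd sign_mul2nS; ring.
Qed.

Lemma SofT_mirror_even a m k : (r.+1 < a <= 2 * r + 2)%N -> ~~ odd m ->
  SofT a m k = SofT (2 * r + 2 - a) m k.
Proof.
move=> ha /negbTE mev; rewrite SofT_sym; last lia.
by rewrite -signr_odd mev mul1r.
Qed.

Lemma SofT_a0 a k : (1 <= a <= (2 * r).+1)%N -> SofT a 0 k = 1.
Proof.
have low b : (1 <= b <= r.+1)%N -> SofT b 0 k = 1.
  move=> hb; case: (ltngtP b r) => [blt|bgt|->].
  - by rewrite SofT_lt ?Ta0 //; lia.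
  - by rewrite (_ : b = r.+1) ?(SofT_r1_even 0) ?Ta0 ?expr1n //; lia.
  by rewrite (SofT_r_even 0) !Ta0 ?mulr1 //; lia.
move=> ha; case: (ltnP r.+1 a) => har; last by apply: low; lia.
by rewrite SofT_mirror_even ?low //; lia.
Qed.

Lemma SofT_a2l a k : (1 <= a <= (2 * r).+1)%N -> SofT a (2 * l) k = 1.
Proof.
have low b : (1 <= b <= r.+1)%N -> SofT b (2 * l) k = 1.
  move=> hb; case: (ltngtP b r) => [blt|bgt|->].
  - by rewrite SofT_lt ?Ta2l //; lia.
  - by rewrite (_ : b = r.+1) ?SofT_r1_even ?Trl_sq //; lia.
  by rewrite SofT_r_even Trl_shift.
move=> ha; case: (ltnP r.+1 a) => har; last by apply: low; lia.
by rewrite SofT_mirror_even ?odd_mul2n ?low //; lia.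
Qed.

Lemma SofT_r1_odd_eq0 m k : odd m -> SofT r.+1 m k = 0.
Proof.
have [n [->|->]] := even_or_odd m; first by rewrite odd_mul2n.
by rewrite SofT_r1_odd.
Qed.

Lemma SofT_unit a m k : Sgen r l a m -> SofT a m k \is a GRing.unit.
Proof.
have low b : (1 <= b <= r.+1)%N -> (1 <= m <= (2 * l).-1)%N -> ~~ ((b == r.+1) && odd m) ->
    SofT b m k \is a GRing.unit.
  move=> hb hm hodd; case: (ltngtP b r) => [blt|bgt|->].
  - by rewrite SofT_lt ?T_unit //; lia.
  - have eb : b = r.+1 by lia.
    move: hodd; rewrite eb eqxx /=; have [n [em|em]] := even_or_odd m; subst m.
      by rewrite SofT_r1_even unitrX // Tr_unit //; lia.
    by rewrite /= odd_mul2n.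
  have [n [em|em]] := even_or_odd m; subst m.
    by rewrite SofT_r_even unitrM !Tr_unit //; lia.
  by rewrite SofT_r_odd unitrM !Tr_unit //; lia.
move=> /andP [/andP [ha hm] hodd].
case: (ltnP r.+1 a) => har; last by apply: low => //; lia.
rewrite SofT_sym; last lia.
by rewrite unitrMr ?unitr_sign // low //; lia.
Qed.

Lemma SofT_hirota a m k : (1 <= a <= (2 * r).+1)%N -> (1 <= m <= (2 * l).-1)%N ->
  hirota SofT a m k.
Proof.
have low b : (1 <= b <= r.+1)%N -> (1 <= m <= (2 * l).-1)%N -> hirota SofT b m k.
  move=> hb hm; have : (b <= r - 2 \/ b = r.-1 \/ b = r \/ b = r.+1)%N by lia.
  case=> [hb'|[->|[->|->]]].
  - by apply: SofT_hirota_lt; lia.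
  - exact: SofT_hirota_rm1.
  - exact: SofT_hirota_r.
  exact: SofT_hirota_r1.
move=> ha hm; case: (ltnP r.+1 a) => har; last by apply: low => //; lia.
rewrite (_ : a = 2 * r + 2 - (2 * r + 2 - a))%N; last lia.
apply: hirota_mirror; [exact: SofT_sym | lia | lia | apply: low => //; lia].
Qed.

Lemma SofT_Ssys : Ssys r l SofT.
Proof.
split; first by move=> m k; rewrite SofT_lt ?T0m //; lia.
split.
  by move=> m k; rewrite SofT_sym // subnn SofT_lt ?T0m ?mulr1 //; lia.
split; first by move=> a k; apply: SofT_a0.
split; first by move=> a k; apply: SofT_a2l.
split; first by move=> m k _; apply: SofT_r1_odd_eq0.
split; first by move=> a m k; apply: SofT_unit.
split; first by move=> a m k; apply: SofT_hirota.
by move=> a m k ha _; apply: SofT_sym; lia.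
Qed.
End SfromT.

Lemma eq_by_combination (R : pzRingType) (x y c u v : R) :
  u = v -> x - y = c * (u - v) -> x = y.
Proof. by move=> -> /eqP; rewrite subrr mulr0 subr_eq0 => /eqP. Qed.

Section TfromS.
Variables (r l : nat) (R : comUnitRingType) (S : nat -> nat -> int -> R).
Hypotheses (hr : (2 <= r)%N) (hl : (2 <= l)%N) (HS : Ssys r l S).

Lemma S0m m k : S 0 m k = 1. Proof. by case: HS. Qed.
Lemma Sa0 a k : (1 <= a <= (2 * r).+1)%N -> S a 0 k = 1.
Proof. by case: HS => _ [_ [h _]]; apply: h. Qed.
Lemma Sa2l a k : (1 <= a <= (2 * r).+1)%N -> S a (2 * l) k = 1.
Proof. by case: HS => _ [_ [_ [h _]]]; apply: h. Qed.
Lemma Sr1_odd m k : (1 <= m <= (2 * l).-1)%N -> odd m -> S r.+1 m k = 0.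
Proof. by case: HS => _ [_ [_ [_ [h _]]]]; apply: h. Qed.
Lemma S_unit a m k : Sgen r l a m -> S a m k \is a GRing.unit.
Proof. by case: HS => _ [_ [_ [_ [_ [h _]]]]]; apply: h. Qed.
Lemma S_hirota a m k : (1 <= a <= (2 * r).+1)%N -> (1 <= m <= (2 * l).-1)%N ->
  hirota S a m k.
Proof. by case: HS => _ [_ [_ [_ [_ [_ [h _]]]]]]; apply: h. Qed.
Lemma S_sym a m k : (1 <= a <= (2 * r).+1)%N -> (1 <= m <= (2 * l).-1)%N ->
  S a m k = (-1) ^+ m * S (2 * r + 2 - a) m k.
Proof. by case: HS => _ [_ [_ [_ [_ [_ [_ h]]]]]]; apply: h. Qed.

(* The candidate for T^(r)_m: S^(r)_(2m+1) = T^(r)_m T^(r)_(m+1) with T^(r)_0 = 1. *)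
Fixpoint TrS (m : nat) (k : int) : R :=
  if m is n.+1 then S r (2 * n).+1 k / TrS n k else 1.

Lemma Sr_odd_unit m k : (m < l)%N -> S r (2 * m).+1 k \is a GRing.unit.
Proof.
by move=> hm; apply: S_unit; rewrite /Sgen (_ : r == r.+1 = false) ?andbF ?andbT; lia.
Qed.

Lemma TrS_unit m k : (m <= l)%N -> TrS m k \is a GRing.unit.
Proof.
elim: m => [|m IH] hm /=; first exact: unitr1.
by rewrite unitrM Sr_odd_unit ?unitrV ?IH //; lia.
Qed.

Lemma Sr_odd_TrS m k : (m < l)%N -> S r (2 * m).+1 k = TrS m.+1 k * TrS m k.
Proof. by move=> hm /=; rewrite divrK // TrS_unit //; lia. Qed.

Lemma Sr2_odd m k : (m < l)%N -> S r.+2 (2 * m).+1 k = - S r (2 * m).+1 k.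
Proof.
move=> hm; rewrite S_sym; [|lia|lia].
by rewrite (_ : 2 * r + 2 - r.+2 = r)%N ?sign_mul2nS ?mulN1r //; lia.
Qed.

Lemma Sr1_even_TrS m k : (m <= l)%N -> S r.+1 (2 * m) k = TrS m k ^+ 2.
Proof.
elim: m => [|m IH] hm; first by rewrite Sa0 ?expr1n //; lia.
have hml : (m < l)%N by lia.
have h : hirota S r.+1 (2 * m).+1 k by apply: S_hirota; lia.
have odd0 j : S r.+1 (2 * m).+1 j = 0.
  by rewrite Sr1_odd //= ?odd_mul2n //; lia.
rewrite /hirota !odd0 /= IH ?Sr2_odd ?Sr_odd_TrS ?(ltnW hml) // in h.
rewrite (_ : (2 * m).+2 = 2 * m.+1)%N in h; last lia.
apply: (mulrI (unitrX 2 (TrS_unit k (ltnW hml)))).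
by apply: (@eq_by_combination R _ _ (-1) _ _ h); ring.
Qed.

Lemma Sr_even_TrS m k : (m <= l)%N -> S r (2 * m) k = TrS m (k - 1) * TrS m (k + 1).
Proof.
elim: m => [|m IH] hm; first by rewrite Sa0 ?mulr1 //; lia.
have hml : (m < l)%N by lia.
have h : hirota S r (2 * m).+1 k by apply: S_hirota; lia.
have ho : S r.+1 (2 * m).+1 k = 0 by rewrite Sr1_odd //= ?odd_mul2n //; lia.
rewrite /hirota /= ho IH ?(ltnW hml) // !Sr_odd_TrS // in h.
rewrite (_ : (2 * m).+2 = 2 * m.+1)%N in h; last lia.
have u : TrS m (k - 1) * TrS m (k + 1) \is a GRing.unit.
  by rewrite unitrM !TrS_unit // ltnW.
apply: (mulrI u).
by apply: (@eq_by_combination R _ _ (-1) _ _ h); ring.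
Qed.

Lemma TrS_l_sq k : TrS l k ^+ 2 = 1.
Proof. by rewrite -Sr1_even_TrS // Sa2l //; lia. Qed.

Lemma TrS_periodic k : TrS l (k + 2) = TrS l k.
Proof.
have := Sr_even_TrS (k + 1) (leqnn l).
rewrite Sa2l; last lia.
rewrite addrK (_ : k + 1 + 1 = k + 2); last ring.
by move=> h; rewrite -[TrS l (k + 2)]mul1r -(TrS_l_sq k) expr2 -mulrA -h mulr1.
Qed.

Lemma TrS_hirota m k : (1 <= m <= l.-1)%N ->
  TrS m (k - 2) * TrS m (k + 2) = TrS m.-1 k * TrS m.+1 k + S r.-1 (2 * m) k.
Proof.
move=> hm; have h : hirota S r (2 * m) k by apply: S_hirota; lia.
have m_le_l : (m <= l)%N by lia.
have m1_lt_l : (m.-1 < l)%N by lia.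
have m_lt_l : (m < l)%N by lia.
have m_gt0 : (0 < m)%N by lia.
rewrite /hirota (_ : (2 * m).-1 = (2 * m.-1).+1)%N in h; last lia.
rewrite !Sr_even_TrS // !Sr_odd_TrS // Sr1_even_TrS // prednK // in h.
have km : k - 1 - 1 = k - 2 by ring.
have kp : k + 1 + 1 = k + 2 by ring.
rewrite km kp subrK addrK in h.
apply: (mulrI (unitrX 2 (TrS_unit k m_le_l))).
by apply: (@eq_by_combination R _ _ 1 _ _ h); ring.
Qed.

Definition TofS (a m : nat) (k : int) : R :=
  if (a < r)%N then S a m k else if a == r then TrS m k else 1.

Lemma TofS_lt a m k : (a < r)%N -> TofS a m k = S a m k.
Proof. by rewrite /TofS => ->. Qed.

Lemma TofS_r m k : TofS r m k = TrS m k.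
Proof. by rewrite /TofS ltnn eqxx. Qed.

Lemma TofS_Tsys : Tsys r l TofS.
Proof.
have rm1 : (r.-1 < r)%N by lia.
have rm2 : (r - 2 < r)%N by lia.
have er2 : r.-1.-1 = (r - 2)%N by lia.
have Shirota_rm1 m k : (1 <= m <= (2 * l).-1)%N ->
    S r.-1 m (k - 1) * S r.-1 m (k + 1) = S r.-1 m.-1 k * S r.-1 m.+1 k + S (r - 2) m k * S r m k.
  move=> hm; have h : hirota S r.-1 m k by apply: S_hirota; lia.
  by rewrite /hirota er2 prednK in h; last lia.
split; first by move=> m k; rewrite TofS_lt ?S0m //; lia.
split.
  move=> a k ha; case: (ltngtP a r) => [alt|agt|->]; [|lia|by rewrite TofS_r].
  by rewrite TofS_lt ?Sa0 //; lia.
split; first by move=> a k ha; rewrite TofS_lt ?Sa2l //; lia.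
split.
  move=> a m k ha hm; rewrite TofS_lt; last lia.
  by apply: S_unit; rewrite /Sgen (_ : a == r.+1 = false) ?andbF ?andbT; lia.
split; first by move=> m k hm; rewrite TofS_r TrS_unit //; lia.
split; first by move=> k; rewrite TofS_r TrS_l_sq.
split; first by move=> k; rewrite !TofS_r TrS_periodic.
split.
  move=> a m k ha hm.
  have [a0 a1 a2] : [/\ a < r, a.-1 < r & a.+1 < r]%N by split; lia.
  by rewrite /hirota !TofS_lt //; apply: S_hirota; lia.
split.
  move=> m k hm; rewrite !TofS_r !TofS_lt // -mulrA -Sr_even_TrS; last lia.
  by apply: Shirota_rm1; lia.
split.
  move=> m k hm; rewrite !TofS_r !TofS_lt // -mulrA [TrS m k * _]mulrC -Sr_odd_TrS; last lia.
  by apply: Shirota_rm1; lia.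
by move=> m k hm; rewrite !TofS_r TofS_lt // TrS_hirota.
Qed.
End TfromS.

Lemma rmorph_id_on_generators (gen : nat -> nat -> bool)
    (sys : forall R : comUnitRingType, (nat -> nat -> int -> R) -> Prop)
    (A : comUnitRingType) (x : nat -> nat -> int -> A) :
    sys A x ->
    (forall (R : comUnitRingType) (y : nat -> nat -> int -> R), sys R y ->
      exists f : {rmorphism A -> R},
        (forall a m k, gen a m -> f (x a m k) = y a m k) /\
        (forall g : {rmorphism A -> R},
           (forall a m k, gen a m -> g (x a m k) = y a m k) -> g =1 f)) ->
  forall g : {rmorphism A -> A}, (forall a m k, gen a m -> g (x a m k) = x a m k) ->
  g =1 id.
Proof.
move=> Hx univ g gx z; have [f [_ f_unique]] := univ A x Hx.
by rewrite (f_unique g gx) -(f_unique idfun).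
Qed.

Section Isomorphism.
Variables (r l : nat) (AS AT : comUnitRingType).
Variables (s : nat -> nat -> int -> AS) (t : nat -> nat -> int -> AT).
Hypotheses (hr : (2 <= r)%N) (hl : (2 <= l)%N) (HS : Ssys r l s) (HT : Tsys r l t).
Variables (rho : {rmorphism AS -> AT}) (sig : {rmorphism AT -> AS}).
Hypothesis rhoE : forall a m k, Sgen r l a m -> rho (s a m k) = SofT r t a m k.
Hypothesis sigE : forall a m k, Tgen r l a m -> sig (t a m k) = TofS r s a m k.

Lemma Sgen_lt a m : (1 <= a <= r)%N -> (1 <= m <= (2 * l).-1)%N -> Sgen r l a m.
Proof. by move=> ha hm; rewrite /Sgen (_ : a == r.+1 = false) ?andbF ?andbT; lia. Qed.

Lemma Sgen_even a m : (1 <= a <= (2 * r).+1)%N -> (1 <= m <= l.-1)%N -> Sgen r l a (2 * m).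
Proof. by move=> ha hm; rewrite /Sgen odd_mul2n andbF andbT; lia. Qed.

Lemma rho_lt a m k : (1 <= a <= r.-1)%N -> (1 <= m <= (2 * l).-1)%N ->
  rho (s a m k) = t a m k.
Proof. by move=> ha hm; rewrite rhoE ?SofT_lt ?Sgen_lt //; lia. Qed.

Lemma rho_r_even m k : (1 <= m <= l.-1)%N ->
  rho (s r (2 * m) k) = t r m (k - 1) * t r m (k + 1).
Proof. by move=> hm; rewrite rhoE ?SofT_r_even ?Sgen_even //; lia. Qed.

Lemma rho_r_odd m k : (m <= l.-1)%N -> rho (s r (2 * m).+1 k) = t r m k * t r m.+1 k.
Proof. by move=> hm; rewrite rhoE ?SofT_r_odd ?Sgen_lt //; lia. Qed.

Lemma rho_r1_even m k : (1 <= m <= l.-1)%N -> rho (s r.+1 (2 * m) k) = t r m k ^+ 2.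
Proof. by move=> hm; rewrite rhoE ?SofT_r1_even ?Sgen_even //; lia. Qed.

Lemma rho_mirror a m k : (r + 2 <= a <= (2 * r).+1)%N -> (1 <= m <= (2 * l).-1)%N ->
  rho (s a m k) = (-1) ^+ m * rho (s (2 * r + 2 - a) m k).
Proof. by move=> ha hm; rewrite (S_sym HS) ?rmorphMsign //; lia. Qed.

Lemma rho_TrS m k : (m <= l)%N -> rho (TrS r s m k) = t r m k.
Proof.
elim: m => [|m IH] hm /=; first by rewrite rmorph1 (Ta0 HT) //; lia.
have hml : (m <= l)%N by lia.
have u := TrS_unit hr hl HS k hml.
rewrite rmorphM rmorphV // IH // rho_r_odd; last lia.
by rewrite mulrC mulKr ?(Tr_unit hr hl HT).
Qed.

Lemma sig_Tr m k : (m <= l)%N -> sig (t r m k) = TrS r s m k.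
Proof.
move=> hm; case: (posnP m) => [->|m_gt0]; first by rewrite (Ta0 HT) ?rmorph1 //; lia.
by rewrite sigE ?TofS_r // /Tgen eqxx hm m_gt0 orbT.
Qed.

Lemma sig_lt a m k : (1 <= a <= r.-1)%N -> (1 <= m <= (2 * l).-1)%N ->
  sig (t a m k) = s a m k.
Proof. by move=> ha hm; rewrite sigE ?TofS_lt /Tgen ?ha ?hm //; lia. Qed.

Lemma sig_rho_generator a m k : Sgen r l a m -> sig (rho (s a m k)) = s a m k.
Proof.
wlog ha : a / (a <= r.+1)%N.
  move=> low hgen; case: (leqP a r.+1) => har; first exact: low.
  move: (hgen) => /andP [/andP [ha hm] _].
  rewrite (S_sym HS) // !rmorphMsign low //; first lia.
  by apply: Sgen_lt; lia.
move=> /andP [/andP [ha1 hm] hodd].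
case: (ltngtP a r) => [alt|agt|->]; first by rewrite rho_lt ?sig_lt //; lia.
  have ea : a = r.+1 by lia.
  move: hodd; rewrite ea eqxx /=; have [n [em|em]] := even_or_odd m; subst m.
    have hn : (1 <= n <= l.-1)%N by lia.
    rewrite rho_r1_even // rmorphXn sig_Tr; last lia.
    by rewrite (Sr1_even_TrS hr hl HS); last lia.
  by rewrite /= odd_mul2n.
have [n [em|em]] := even_or_odd m; subst m.
  have hn : (1 <= n <= l.-1)%N by lia.
  rewrite rho_r_even // rmorphM !sig_Tr; [|lia|lia].
  by rewrite (Sr_even_TrS hr hl HS); last lia.
have [hn hn'] : (n < l)%N /\ (n <= l)%N by split; lia.
rewrite rho_r_odd; last lia.
by rewrite rmorphM !sig_Tr // mulrC (Sr_odd_TrS hr hl HS).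
Qed.

Lemma rho_sig_generator a m k : Tgen r l a m -> rho (sig (t a m k)) = t a m k.
Proof.
case/orP => [/andP [ha hm] | /andP [/eqP -> hm]]; first by rewrite sig_lt ?rho_lt.
by rewrite sig_Tr ?rho_TrS //; lia.
Qed.
End Isomorphism.

Theorem proposition6p8 (r l : nat) (hr : (2 <= r)%N) (hl : (2 <= l)%N)
  (AS : comUnitRingType) (s : nat -> nat -> int -> AS)
  (AT : comUnitRingType) (t : nat -> nat -> int -> AT) :
  is_Sring r l s -> is_Tring r l t ->
  exists rho : {rmorphism AS -> AT},
    bijective rho /\
    (forall a m k, (1 <= a <= r.-1)%N -> (1 <= m <= (2 * l).-1)%N ->
       rho (s a m k) = t a m k) /\
    (forall m k, (1 <= m <= l.-1)%N ->
       rho (s r (2 * m)%N k) = t r m (k - 1) * t r m (k + 1)) /\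
    (forall m k, (m <= l.-1)%N ->
       rho (s r (2 * m).+1 k) = t r m k * t r m.+1 k) /\
    (forall m k, (1 <= m <= l.-1)%N ->
       rho (s r.+1 (2 * m)%N k) = t r m k ^+ 2) /\
    (forall a m k, (r + 2 <= a <= (2 * r).+1)%N -> (1 <= m <= (2 * l).-1)%N ->
       rho (s a m k) = (-1) ^+ m * rho (s (2 * r + 2 - a)%N m k)).
Proof.
move=> [HS Suniv] [HT Tuniv].
have [rho [rhoE _]] := Suniv AT (SofT r t) (SofT_Ssys hr hl HT).
have [sig [sigE _]] := Tuniv AS (TofS r s) (TofS_Tsys hr hl HS).
have sigK : cancel rho sig.
  apply: (rmorph_id_on_generators HS Suniv (g := sig \o rho : {rmorphism AS -> AS})).
  exact: (sig_rho_generator hr hl HS HT rhoE sigE).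
have rhoK : cancel sig rho.
  apply: (rmorph_id_on_generators HT Tuniv (g := rho \o sig : {rmorphism AT -> AT})).
  exact: (rho_sig_generator hr hl HS HT rhoE sigE).
exists rho; split; first exact: Bijective sigK rhoK.
split; first exact: rho_lt.
split; first exact: rho_r_even.
split; first exact: rho_r_odd.
split; first exact: rho_r1_even.
exact: rho_mirror.
Qed.
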